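(* Let $\Gamma_1,\Gamma_2$ be co-prime integers with $1<\Gamma_1<\Gamma_2$, with Euclidean sequence $\sigma_{-1},\sigma_0,\dots,\sigma_{K+1}$ and numbers $\ddot n_{2,j},\ddot n_{1,j}$ ($1\le j\le K+1$) as defined in the context. Then: If $K=0$: $\ddot n_{2,1}=\Gamma_1-1$ and $\ddot n_{1,1}=\Gamma_2-1$. If $K\ge1$: $\ddot n_{2,K+1}=\Gamma_1-1$, $\ddot n_{1,K+1}=\Gamma_2-1$, and for $1\le j\le K$: $$\ddot n_{2,j}=\begin{cases}\lfloor\Gamma_1/\sigma_1\rfloor & j=1,\\ \lfloor\Gamma_1/\sigma_1\rfloor\lfloor\sigma_1/\sigma_2\rfloor & j=2,\\ \lfloor\sigma_{2p}/\sigma_{2p+1}\rfloor(\ddot n_{2,2p}+1)+\ddot n_{2,2p-1} & j=2p+1,\ p\ge1,\\ \lfloor\sigma_{2p+1}/\sigma_{2p+2}\rfloor\ddot n_{2,2p+1}+\ddot n_{2,2p} & j=2p+2,\ p\ge1,\end{cases}$$ $$\ddot n_{1,j}=\begin{cases}\lfloor\Gamma_2/\Gamma_1\rfloor\lfloor\Gamma_1/\sigma_1\rfloor & j=1,\\ \lfloor\Gamma_2/\Gamma_1\rfloor\lfloor\Gamma_1/\sigma_1\rfloor\lfloor\sigma_1/\sigma_2\rfloor+\lfloor\sigma_1/\sigma_2\rfloor+\lfloor\Gamma_2/\Gamma_1\rfloor & j=2,\\ \lfloor\sigma_{2p}/\sigma_{2p+1}\rfloor\ddot n_{1,2p}+\ddot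 n_{1,2p-1} & j=2p+1,\ p\ge1,\\ \lfloor\sigma_{2p+1}/\sigma_{2p+2}\rfloor(\ddot n_{1,2p+1}+1)+\ddot n_{1,2p} & j=2p+2,\ p\ge1.\end{cases}$$
   Context: $|a|_b$ is the remainder of the integer $a$ modulo the positive integer $b$. Euclidean sequence: $\sigma_{-1}=\Gamma_2$, $\sigma_0=\Gamma_1$, $\sigma_i=|\sigma_{i-2}|_{\sigma_{i-1}}$ for $i\ge1$; $K\ge0$ is the (existing, unique) index with $\sigma_K>1$ and $\sigma_{K+1}=1$. For $1\le n<\Gamma_1$ let $S_{2,n}=\{|t\Gamma_2|_{\Gamma_1}: t=0,1,\dots,n\}$ and let $d_{2,n}$ be the minimum distance between two distinct elements of $S_{2,n}$; for $1\le n<\Gamma_2$ let $S_{1,n}=\{|t\Gamma_1|_{\Gamma_2}: t=0,1,\dots,n\}$ and $d_{1,n}$ the minimum distance between two distinct elements of $S_{1,n}$. For $1\le j\le K+1$ define $\ddot n_{2,j}=\max\{n: 1\le n<\Gamma_1,\ d_{2,n}\ge\sigma_j\}$ and $\ddot n_{1,j}=\max\{n:1\le n<\Gamma_2,\ d_{1,n}\ge\sigma_j\}$. *)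

From mathcomp Require Import all_boot.
Set Implicit Arguments. Unset Strict Implicit. Unset Printing Implicit Defensive.

(* Euclidean sequence: sigpair g1 g2 i = (sigma_{i-1}, sigma_i), starting from
   (sigma_{-1}, sigma_0) = (g2, g1), and sigma_i = sigma_{i-2} mod sigma_{i-1}. *)
Fixpoint sigpair (g1 g2 : nat) (i : nat) : nat * nat :=
  match i with
  | 0 => (g2, g1)
  | i'.+1 => let: (a, b) := sigpair g1 g2 i' in (b, a %% b)
  end.

Definition sigma (g1 g2 i : nat) : nat := (sigpair g1 g2 i).2.

Definition ndist (x y : nat) : nat := (x - y) + (y - x).

(* minimum distance between two distinct elements of s
   (only used when s has at least two distinct elements) *)
Definition mindist (s : seq nat) : nat :=
  let D := [seq ndist x y | x <- s, y <- [seq y <- s | y != x]] in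
  foldr minn (head 0 D) D.

Definition Sset (a b n : nat) : seq nat := [seq (t * a) %% b | t <- iota 0 n.+1].

Definition d2 (g1 g2 n : nat) : nat := mindist (Sset g2 g1 n).
Definition d1 (g1 g2 n : nat) : nat := mindist (Sset g1 g2 n).

Definition ndd2 (g1 g2 j : nat) : nat :=
  \max_(1 <= n < g1 | sigma g1 g2 j <= d2 g1 g2 n) n.
Definition ndd1 (g1 g2 j : nat) : nat :=
  \max_(1 <= n < g2 | sigma g1 g2 j <= d1 g1 g2 n) n.

From mathcomp Require Import all_boot all_order all_algebra zify ring.
Set Implicit Arguments. Unset Strict Implicit. Unset Printing Implicit Defensive.
Import Order.TTheory GRing.Theory Num.Theory.

(* Let r_i be the Euclidean remainders of (b, a), q_i = r_i / r_(i+1) the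
   partial quotients, and E_i / C_i the convergents of a / b, so that
   C_i a - E_i b = (-1)^(i+1) r_i and the basis (C_i, E_i), (C_(i+1), E_(i+1))
   of Z^2 is unimodular.  Two of the residues t a mod b, 0 <= t <= n, differ by
   |k a - m b| with 0 < k <= n.  Writing (k, m) in that basis, the two
   coordinates have opposite signs unless (k, m) = (C_(i+1), E_(i+1)), so the
   difference is at least r_i as long as k < C_(i+1); for odd i the value
   k = C_(i+1) is harmless too.  Conversely the residue of C_(i+1) a (of
   (C_(i+1) + 1) a if i is odd) lies at distance r_(i+1) < r_i from that of 0
   (of a).  Hence the largest admissible n is C_(i+1) - [i even], and the
   recurrences of the theorem are those of the continuants,
   C_(i+2) = C_i + q_i C_(i+1).  The residues of multiples of Gamma_2 modulo
   Gamma_1 are those of Gamma_2 mod Gamma_1, whose Euclidean sequence is that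
   of (Gamma_1, Gamma_2) shifted by one step. *)

(* [euclid_rem a b i] is r_i with r_0 = b, r_1 = a; thus r_(i+1) = sigma_i. *)
Definition euclid_rem (a b i : nat) : nat := (sigpair a b i).1.
Definition euclid_quo (a b i : nat) : nat := euclid_rem a b i %/ euclid_rem a b i.+1.

Fixpoint continuant (q : nat -> nat) (x0 x1 i : nat) : nat :=
  match i with
  | 0 => x0
  | 1 => x1
  | (j.+1 as i').+1 => continuant q x0 x1 j + q j * continuant q x0 x1 i'
  end.
Arguments continuant : simpl never.

Definition conv_den (a b : nat) : nat -> nat := continuant (euclid_quo a b) 0 1.
Definition conv_num (a b : nat) : nat -> nat := continuant (euclid_quo a b) 1 0.

Lemma euclid_remS a b i : euclid_rem a b i.+1 = sigma a b i.
Proof. by rewrite /euclid_rem /sigma /=; case: sigpair. Qed.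

Lemma euclid_remSS a b i :
  euclid_rem a b i.+2 = euclid_rem a b i %% euclid_rem a b i.+1.
Proof. by rewrite /euclid_rem /=; case: sigpair. Qed.

Lemma euclid_rem_modn a b i : euclid_rem (b %% a) a i = sigma a b i.
Proof.
have shift j : sigpair (b %% a) a j = sigpair a b j.+1.
  by elim: j => //= j ->.
by rewrite /euclid_rem /sigma shift /=; case: sigpair.
Qed.

Lemma euclid_quoS a b i : euclid_quo a b i.+1 = sigma a b i %/ sigma a b i.+1.
Proof. by rewrite /euclid_quo !euclid_remS. Qed.

Lemma euclid_quo_modn a b i : euclid_quo (b %% a) a i = sigma a b i %/ sigma a b i.+1.
Proof. by rewrite /euclid_quo !euclid_rem_modn. Qed.

Section Convergents.
Variables a b : nat.
Local Notation r := (euclid_rem a b).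
Local Notation q := (euclid_quo a b).
Local Notation C := (conv_den a b).
Local Notation E := (conv_num a b).

Lemma euclid_rem0 : r 0 = b. Proof. by []. Qed.
Lemma euclid_rem1 : r 1 = a. Proof. by []. Qed.

Lemma euclid_rem_div i : r i = q i * r i.+1 + r i.+2.
Proof. by rewrite euclid_remSS; apply: divn_eq. Qed.

Lemma euclid_rem_ltS i : 0 < i -> 1 < r i -> r i.+1 < r i.
Proof. by case: i => // i _ r_gt1; rewrite euclid_remSS ltn_mod (leq_trans _ r_gt1). Qed.

Lemma conv_den0 : C 0 = 0. Proof. by []. Qed.
Lemma conv_den1 : C 1 = 1. Proof. by []. Qed.
Lemma conv_num0 : E 0 = 1. Proof. by []. Qed.
Lemma conv_num1 : E 1 = 0. Proof. by []. Qed.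
Lemma conv_denSS i : C i.+2 = C i + q i * C i.+1. Proof. by []. Qed.
Lemma conv_numSS i : E i.+2 = E i + q i * E i.+1. Proof. by []. Qed.

Lemma conv_residual i : ((C i)%:Z * a%:Z - (E i)%:Z * b%:Z = (-1) ^+ i.+1 * (r i)%:Z)%R.
Proof.
pose P j := ((C j)%:Z * a%:Z - (E j)%:Z * b%:Z = (-1) ^+ j.+1 * (r j)%:Z)%R.
suff two j : P j /\ P j.+1 by case: (two i).
elim: j => [|j [IH IHS]].
  by rewrite /P conv_den0 conv_den1 conv_num0 conv_num1 euclid_rem0 euclid_rem1; split; ring.
split=> //; rewrite /P in IH IHS *.
have rSS : ((r j.+2)%:Z = (r j)%:Z - (q j)%:Z * (r j.+1)%:Z)%R.
  by rewrite [in RHS](euclid_rem_div j) PoszD PoszM; ring.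
rewrite conv_denSS conv_numSS !PoszD !PoszM rSS.
transitivity ((C j)%:Z * a%:Z - (E j)%:Z * b%:Z
              + (q j)%:Z * ((C j.+1)%:Z * a%:Z - (E j.+1)%:Z * b%:Z))%R; first by ring.
by rewrite IH IHS !exprS; ring.
Qed.

Lemma conv_residual_nat i : if odd i then C i * a = E i * b + r i else E i * b = C i * a + r i.
Proof.
by have := conv_residual i; rewrite -signr_odd /=; case: odd; rewrite /= ?expr0 ?expr1; lia.
Qed.

Lemma conv_det i : ((C i.+1)%:Z * (E i)%:Z - (C i)%:Z * (E i.+1)%:Z = (-1) ^+ i)%R.
Proof.
elim: i => [|i IH]; first by rewrite conv_den0 conv_den1 conv_num0 conv_num1.
by rewrite conv_denSS conv_numSS exprS -IH !PoszD !PoszM; ring.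
Qed.

Lemma conv_den_rem_sum i : r i * C i.+1 + r i.+1 * C i = b.
Proof.
elim: i => [|i IH]; first by rewrite euclid_rem0 conv_den1 conv_den0; lia.
by rewrite conv_denSS; have := euclid_rem_div i; nia.
Qed.

Hypothesis a_gt0 : 0 < a.

Lemma euclid_rem_le i : 0 < i -> r i <= a.
Proof.
suff le2 j : r j.+1 <= a /\ r j.+2 <= a by case: i => // i; case: (le2 i).
elim: j => [|j [le_j le_jS]]; first by split; rewrite // euclid_remSS ltnW ?ltn_mod.
by split; last rewrite euclid_remSS (leq_trans (leq_mod _ _) le_j).
Qed.

Hypothesis a_lt_b : a < b.

Lemma conv_den_gt0 i : 0 < i -> 0 < C i.
Proof.
suff two j : 0 < C j.+1 /\ 0 < C j.+2 by case: i => // i _; case: (two i).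
elim: j => [|j [gt0_j gt0_jS]]; last by split=> //; rewrite conv_denSS addn_gt0 gt0_j.
split=> //; rewrite conv_denSS conv_den0 conv_den1 /euclid_quo euclid_rem0 euclid_rem1.
by rewrite muln1 divn_gt0 // ltnW.
Qed.

Hypothesis coprime_ab : coprime a b.

Lemma coprime_euclid_rem i : coprime (r i) (r i.+1).
Proof.
elim: i => [|i IH]; first by rewrite coprime_sym.
by rewrite euclid_remSS /coprime gcdn_modr gcdnC.
Qed.

Lemma euclid_rem_gt0 i : 1 < r i -> 0 < r i.+1.
Proof.
move=> r_gt1; rewrite lt0n; apply: contraTneq (coprime_euclid_rem i) => ->.
by rewrite /coprime gcdn0 neq_ltn r_gt1 orbT.
Qed.

Lemma euclid_rem_le1S i : r i <= 1 -> r i.+1 <= 1.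
Proof.
case: i => [|i]; first by rewrite euclid_rem0; lia.
rewrite euclid_remSS; have := coprime_euclid_rem i.
case: (r i.+1) => [|[|n]] //; last by rewrite modn1.
by rewrite /coprime gcdn0 modn0 => /eqP ->.
Qed.

Lemma euclid_rem_gt1 i j : i <= j -> 1 < r j -> 1 < r i.
Proof.
elim: j => [|j IH]; first by rewrite leqn0 => /eqP ->.
rewrite leq_eqVlt => /predU1P [-> // | lt_ij r_gt1].
apply: IH lt_ij _; rewrite ltnNge; apply/negP => /euclid_rem_le1S.
by rewrite leqNgt r_gt1.
Qed.

End Convergents.

Lemma foldr_minn_le h D d : d \in D -> foldr minn h D <= d.
Proof. by elim: D => //= y D IH; rewrite in_cons => /predU1P [-> | /IH]; lia. Qed.

Lemma foldr_minn_ge L h D :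
  L <= h -> (forall d, d \in D -> L <= d) -> L <= foldr minn h D.
Proof.
move=> le_h; elim: D => //= y D IH le_D.
by rewrite leq_min le_D ?mem_head ?IH // => d Dd; rewrite le_D // in_cons Dd orbT.
Qed.

Lemma ndistC x y : ndist x y = ndist y x.
Proof. by rewrite /ndist addnC. Qed.

Lemma mindist_le s x y : x \in s -> y \in s -> y != x -> mindist s <= ndist x y.
Proof.
move=> sx sy neq; apply: foldr_minn_le; apply/allpairsPdep.
by exists x, y; rewrite mem_filter neq sy.
Qed.

Lemma mindist_ge s L x0 y0 : x0 \in s -> y0 \in s -> y0 != x0 ->
  (forall x y, x \in s -> y \in s -> y != x -> L <= ndist x y) -> L <= mindist s.
Proof.
move=> sx0 sy0 neq0 le_pairs.
set D := [seq ndist x y | x <- s, y <- [seq y <- s | y != x]].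
have le_D d : d \in D -> L <= d.
  by case/allpairsPdep=> x [y [sx]]; rewrite mem_filter => /andP [neq sy] ->; apply: le_pairs.
have D0 : ndist x0 y0 \in D.
  by apply/allpairsPdep; exists x0, y0; rewrite mem_filter neq0 sy0.
rewrite /mindist -/D; apply: foldr_minn_ge => //; apply: le_D.
by case: D D0 => //= d D _; rewrite mem_head.
Qed.

Lemma Sset_mem a b n t : t <= n -> t * a %% b \in Sset a b n.
Proof. by move=> le_tn; apply: (map_f (fun t => t * a %% b)); rewrite mem_iota add0n ltnS. Qed.

Lemma SsetP a b n x : x \in Sset a b n -> exists2 t, t <= n & x = t * a %% b.
Proof. by case/mapP=> t; rewrite mem_iota add0n ltnS => /andP [_ le_tn] ->; exists t. Qed.

Lemma Sset_modn a b n : Sset (b %% a) a n = Sset b a n.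
Proof. by apply: eq_map => t; rewrite modnMmr. Qed.

Lemma bigmax_iota_leq b N (P : pred nat) : N < b ->
  (forall n, 1 <= n < b -> P n = (n <= N)) -> \max_(1 <= n < b | P n) n = N.
Proof.
move=> lt_Nb PE; apply/eqP; rewrite eqn_leq; apply/andP; split.
  by apply/bigmax_leqP_seq => n; rewrite mem_index_iota => bn; rewrite PE.
case: N lt_Nb PE => // N lt_Nb PE.
by apply: (leq_bigmax_seq N.+1); rewrite ?mem_index_iota ?PE ?lt_Nb.
Qed.

Section IntegerDistance.
Local Open Scope ring_scope.

Lemma ndist_modn_mul a b v w :
  (ndist (v * a %% b) (w * a %% b))%N%:Z
  = `|(v%:Z - w%:Z) * a%:Z - ((v * a %/ b)%N%:Z - (w * a %/ b)%N%:Z) * b%:Z|.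
Proof. by rewrite /ndist; have := divn_eq (v * a) b; have := divn_eq (w * a) b; lia. Qed.

Lemma ler_normDl_sameSign (R : realDomainType) (x y : R) :
  0 <= x * y -> `|x| <= `|x + y|.
Proof.
case: (ltrgt0P x) => [x_gt0 | x_lt0 | ->]; rewrite ?normr0 ?normr_ge0 //.
  rewrite pmulr_rge0 // => y_ge0.
  by rewrite !ger0_norm ?lerDl // ?addr_ge0 // ltW.
rewrite nmulr_rge0 // => y_le0.
by rewrite !ler0_norm ?opprD ?lerDl ?oppr_ge0 // -oppr_ge0 opprD addr_ge0 // oppr_ge0 // ltW.
Qed.

Lemma unimodular_coord (R : comRingType) (k m c e c' e' : R) :
  (c' * e - c * e') ^+ 2 = 1 ->
  exists al be, k = al * c + be * c' /\ m = al * e + be * e'.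
Proof.
move=> unimodular; set s := c' * e - c * e'.
exists ((m * c' - k * e') * s), ((e * k - c * m) * s).
by split; rewrite -[LHS]mulr1 -unimodular /s; ring.
Qed.

Lemma best_approximation (a b c e c' e' k m : int) :
  (c' * e - c * e') ^+ 2 = 1 -> (c * a - e * b) * (c' * a - e' * b) <= 0 ->
  0 < c -> 0 < c' -> 0 < k <= c' -> (k != c') || (m != e') ->
  `|c * a - e * b| <= `|k * a - m * b|.
Proof.
move=> /(unimodular_coord k m)[al [be [kE mE]]] opposite c_gt0 c'_gt0 /andP [k_gt0 k_le] neq.
have al_neq0 : al != 0.
  apply/eqP=> al0; move: kE mE; rewrite al0 !mul0r !add0r => kE mE.
  have be1 : be = 1 by rewrite kE in k_gt0 k_le; clear -k_gt0 k_le c'_gt0; nia.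
  by move: neq; rewrite kE mE be1 !mul1r !eqxx.
have albe : al * be <= 0.
  move: kE k_gt0 k_le al_neq0; clear -c_gt0 c'_gt0 => ->.
  by case: (ltrgt0P al) => al0; case: (ltrgt0P be) => be0; nia.
have -> : k * a - m * b = al * (c * a - e * b) + be * (c' * a - e' * b).
  by rewrite kE mE; ring.
apply: le_trans (ler_normDl_sameSign _); last by rewrite mulrACA mulr_le0.
rewrite normrM ler_peMl ?normr_ge0 //; clear -al_neq0; lia.
Qed.

End IntegerDistance.

Section MinimalDistance.
Variables a b i : nat.
Hypotheses (a_gt0 : 0 < a) (a_lt_b : a < b) (coprime_ab : coprime a b).
Hypotheses (i_gt0 : 0 < i) (r_gt1 : 1 < euclid_rem a b i).
Local Notation r := (euclid_rem a b).
Local Notation C := (conv_den a b).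
Local Notation E := (conv_num a b).

Let rS_gt0 : 0 < r i.+1. Proof. exact: euclid_rem_gt0. Qed.
Let rS_lt : r i.+1 < r i. Proof. exact: euclid_rem_ltS. Qed.

Lemma mindist_Sset_lt n : C i.+1 + odd i <= n -> mindist (Sset a b n) < r i.
Proof.
have rS_le_a : r i.+1 <= a by apply: euclid_rem_le.
have := conv_residual_nat a b i.+1; rewrite /=.
case: (odd i) => /= eqS le_n.
  have xC : (C i.+1 + 1) * a %% b = a - r i.+1.
    by rewrite (_ : _ * a = E i.+1 * b + (a - r i.+1)) ?modnMDl ?modn_small; lia.
  have x1 : 1 * a %% b = a by rewrite mul1n modn_small.
  have neq : a - r i.+1 != a by apply/eqP; lia.
  have := mindist_le (Sset_mem a b (_ : 1 <= n)) (Sset_mem a b le_n).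
  by rewrite x1 xC => /(_ _ neq) /leq_ltn_trans; apply; rewrite /ndist; lia.
have xC : C i.+1 * a %% b = r i.+1 by rewrite eqS modnMDl modn_small; lia.
have x0 : 0 * a %% b = 0 by rewrite mul0n mod0n.
have neq : r i.+1 != 0 by rewrite -lt0n.
have := mindist_le (Sset_mem a b (leq0n n)) (Sset_mem a b (_ : C i.+1 <= n)).
by rewrite x0 xC => /(_ _ neq) /leq_ltn_trans; apply; rewrite /ndist; lia.
Qed.

Lemma residue_gap_ge v w : w < v -> v + ~~ odd i <= C i.+1 ->
  w * a %% b != v * a %% b -> r i <= ndist (v * a %% b) (w * a %% b).
Proof.
move=> lt_wv le_v neq; rewrite -lez_nat ndist_modn_mul.
apply: le_trans
  (best_approximation (c := C i) (e := E i) (c' := C i.+1) (e' := E i.+1) _ _ _ _ _ _).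
- by rewrite conv_residual normrM normr_sign mul1r.
- by rewrite conv_det sqrr_sign.
- by rewrite !conv_residual mulrACA -exprD -signr_odd addnS oddS oddD addbb /= mulN1r oppr_le0.
- by rewrite ltz_nat conv_den_gt0.
- by rewrite ltz_nat conv_den_gt0.
- by clear -lt_wv le_v; lia.
(* k = C_(i+1) forces w = 0 and i odd; then C_(i+1) a = E_(i+1) b - r_(i+1),
   so the quotient m of C_(i+1) a by b is not E_(i+1). *)
case: eqP => //= k_eq; apply/eqP => m_eq.
have := conv_residual_nat a b i.+1; rewrite /=.
case: (odd i) le_v => /= le_v eqS; last by clear -k_eq le_v; lia.
have w0 : w = 0 by clear -k_eq le_v; lia.
have v_eq : v = C i.+1 by clear -k_eq le_v w0; lia.
move: m_eq; rewrite w0 v_eq mul0n div0n subr0 => -[m_eq].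
have := divn_eq (C i.+1 * a) b; rewrite m_eq eqS.
by move: (C i.+1 * a %% b) (C i.+1 * a) => x y; clear -rS_gt0; lia.
Qed.

Lemma mindist_Sset_ge n : 0 < n -> n + ~~ odd i <= C i.+1 -> r i <= mindist (Sset a b n).
Proof.
move=> n_gt0 le_n.
have x0 : 0 * a %% b = 0 by rewrite mul0n mod0n.
have x1 : 1 * a %% b = a by rewrite mul1n modn_small.
apply: (@mindist_ge _ _ 0 a); rewrite -?lt0n //.
- by rewrite -{1}x0 Sset_mem.
- by rewrite -{1}x1 Sset_mem.
move=> _ _ /SsetP [v le_v ->] /SsetP [w le_w ->] neq.
case: (ltngtP v w) => [lt_vw | lt_wv | eq_vw]; last by rewrite eq_vw eqxx in neq.
  by rewrite ndistC residue_gap_ge 1?eq_sym // (leq_trans _ le_n) ?leq_add2r.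
by rewrite residue_gap_ge // (leq_trans _ le_n) ?leq_add2r.
Qed.

Lemma bigmax_mindist_Sset :
  \max_(1 <= n < b | r i <= mindist (Sset a b n)) n = C i.+1 - ~~ odd i.
Proof.
have CS_lt_b : C i.+1 < b.
  have := conv_den_rem_sum a b i; have : 0 < C i.+1 by apply: conv_den_gt0.
  by clear -r_gt1; nia.
apply: bigmax_iota_leq => [|n /andP [n_gt0 _]]; first by clear -CS_lt_b; lia.
apply/idP/idP => [|le_n]; last by apply: mindist_Sset_ge; lia.
by apply: contraTT; rewrite -!ltnNge => lt_n; apply: mindist_Sset_lt; lia.
Qed.

End MinimalDistance.

Lemma bigmax_mindist_Sset_le1 a b L : 0 < a -> a < b -> L <= 1 ->
  \max_(1 <= n < b | L <= mindist (Sset a b n)) n = b - 1.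
Proof.
move=> a_gt0 a_lt_b L_le1; apply: bigmax_iota_leq => [|n /andP [n_gt0 n_lt_b]]; first lia.
have -> : n <= b - 1 by lia.
apply: leq_trans L_le1 _; apply: (@mindist_ge _ _ 0 a).
- by rewrite -{1}(mod0n b) -(mul0n a) Sset_mem.
- by rewrite -{1}(@modn_small a b) // -{1}(mul1n a) Sset_mem.
- by rewrite -lt0n.
- by move=> x y _ _; rewrite /ndist; lia.
Qed.

Section GapCounts.
Variables g1 g2 : nat.
Hypotheses (coprime_g : coprime g1 g2) (g1_gt1 : 1 < g1) (g1_lt_g2 : g1 < g2).
Local Notation sigma := (sigma g1 g2).
Local Notation Q j := (sigma j %/ sigma j.+1).
Local Notation C1 := (conv_den g1 g2).
Local Notation C2 := (conv_den (g2 %% g1) g1).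

Let g1_gt0 : 0 < g1. Proof. exact: ltnW. Qed.
Let s1_lt_g1 : g2 %% g1 < g1. Proof. by rewrite ltn_mod. Qed.
Let coprime_s1 : coprime (g2 %% g1) g1. Proof. by rewrite /coprime gcdnC gcdn_modr. Qed.
Let s1_gt0 : 0 < g2 %% g1.
Proof.
rewrite lt0n; apply: contraTneq coprime_g => s1_eq0.
by rewrite /coprime -gcdn_modr s1_eq0 gcdn0 neq_ltn g1_gt1 orbT.
Qed.

Lemma sigma_gt1 i j : i <= j -> 1 < sigma j -> 1 < sigma i.
Proof. by rewrite -!euclid_remS -ltnS; apply: euclid_rem_gt1. Qed.

Lemma ndd1_sigma_le1 j : sigma j <= 1 -> ndd1 g1 g2 j = g2 - 1.
Proof. by move=> sigma_le1; rewrite /ndd1 /d1 bigmax_mindist_Sset_le1. Qed.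

Lemma ndd2_sigma_le1 j : sigma j <= 1 -> ndd2 g1 g2 j = g1 - 1.
Proof.
move=> sigma_le1; rewrite /ndd2 /d2; under eq_bigl do rewrite -Sset_modn.
by rewrite bigmax_mindist_Sset_le1.
Qed.

Lemma ndd1_conv j : 1 < sigma j -> ndd1 g1 g2 j = C1 j.+2 - odd j.
Proof.
move=> gt1; rewrite /ndd1 /d1 -euclid_remS bigmax_mindist_Sset /= ?negbK //.
by rewrite euclid_remS.
Qed.

Lemma ndd2_conv j : 0 < j -> 1 < sigma j -> ndd2 g1 g2 j = C2 j.+1 - ~~ odd j.
Proof.
move=> j_gt0 gt1; rewrite /ndd2 /d2; under eq_bigl do rewrite -Sset_modn.
by rewrite -euclid_rem_modn bigmax_mindist_Sset // euclid_rem_modn.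
Qed.

Lemma ndd1_rec j : 1 < sigma j.+2 ->
  ndd1 g1 g2 j.+2 = Q j.+1 * (ndd1 g1 g2 j.+1 + odd j.+1) + ndd1 g1 g2 j.
Proof.
move=> gt1; have gt1S := sigma_gt1 (leqnSn _) gt1; have gt1SS := sigma_gt1 (leqnSn _) gt1S.
rewrite !ndd1_conv // conv_denSS euclid_quoS.
have C1_gt0 k : 0 < C1 k.+1 by apply: conv_den_gt0.
by rewrite /=; case: (odd j); rewrite /= ?subn0 ?addn0 ?subnK ?addnBA ?C1_gt0 // addnC.
Qed.

Lemma ndd2_rec j : 0 < j -> 1 < sigma j.+2 ->
  ndd2 g1 g2 j.+2 = Q j.+1 * (ndd2 g1 g2 j.+1 + ~~ odd j.+1) + ndd2 g1 g2 j.
Proof.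
move=> j_gt0 gt1; have gt1S := sigma_gt1 (leqnSn _) gt1; have gt1SS := sigma_gt1 (leqnSn _) gt1S.
rewrite !ndd2_conv // conv_denSS euclid_quo_modn.
have C2_gt0 k : 0 < C2 k.+1 by apply: conv_den_gt0.
by rewrite /=; case: (odd j); rewrite /= ?subn0 ?addn0 ?subnK ?addnBA ?C2_gt0 // [C2 j.+1 + _]addnC.
Qed.

Lemma ndd2_1 : 1 < sigma 1 -> ndd2 g1 g2 1 = g1 %/ sigma 1.
Proof.
move=> gt1; rewrite ndd2_conv // conv_denSS conv_den0 conv_den1.
by rewrite euclid_quo_modn muln1 add0n subn0.
Qed.

Lemma ndd1_1 : 1 < sigma 1 -> ndd1 g1 g2 1 = (g2 %/ g1) * (g1 %/ sigma 1).
Proof.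
move=> gt1; rewrite ndd1_conv // !conv_denSS euclid_quoS.
rewrite conv_den0 conv_den1 /euclid_quo euclid_rem0 euclid_rem1.
by rewrite muln1 add0n [odd _]/= addKn mulnC.
Qed.

Lemma ndd2_2 : 1 < sigma 2 -> ndd2 g1 g2 2 = (g1 %/ sigma 1) * (sigma 1 %/ sigma 2).
Proof.
move=> gt1; rewrite ndd2_conv // conv_denSS conv_denSS conv_den0 conv_den1.
by rewrite !euclid_quo_modn muln1 add0n addKn mulnC.
Qed.

Lemma ndd1_2 : 1 < sigma 2 ->
  ndd1 g1 g2 2 = (g2 %/ g1) * (g1 %/ sigma 1) * (sigma 1 %/ sigma 2)
                 + (sigma 1 %/ sigma 2) + (g2 %/ g1).
Proof.
move=> gt1; have gt1S := sigma_gt1 (leqnSn _) gt1; have gt1SS := sigma_gt1 (leqnSn _) gt1S.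
rewrite (ndd1_rec (j := 0)) // ndd1_1 // ndd1_conv //.
rewrite conv_denSS conv_den0 conv_den1 /euclid_quo euclid_rem0 euclid_rem1.
by rewrite muln1 add0n subn0 mulnDr muln1 [Q 1 * _]mulnC.
Qed.

End GapCounts.

Theorem lemma6 (g1 g2 K : nat) :
  coprime g1 g2 -> 1 < g1 -> g1 < g2 ->
  1 < sigma g1 g2 K -> sigma g1 g2 K.+1 = 1 ->
  (K = 0 -> ndd2 g1 g2 1 = g1 - 1 /\ ndd1 g1 g2 1 = g2 - 1) /\
  (1 <= K ->
     ndd2 g1 g2 K.+1 = g1 - 1 /\
         ndd1 g1 g2 K.+1 = g2 - 1 /\
         ndd2 g1 g2 1 = g1 %/ sigma g1 g2 1 /\
         ndd1 g1 g2 1 = (g2 %/ g1) * (g1 %/ sigma g1 g2 1) /\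
         (2 <= K ->
            ndd2 g1 g2 2 = (g1 %/ sigma g1 g2 1) * (sigma g1 g2 1 %/ sigma g1 g2 2)
            /\ ndd1 g1 g2 2 = (g2 %/ g1) * (g1 %/ sigma g1 g2 1)
                                * (sigma g1 g2 1 %/ sigma g1 g2 2)
                              + (sigma g1 g2 1 %/ sigma g1 g2 2) + (g2 %/ g1)) /\
         (forall p, 1 <= p -> (2 * p).+1 <= K ->
            ndd2 g1 g2 (2 * p).+1
              = (sigma g1 g2 (2 * p) %/ sigma g1 g2 (2 * p).+1)
                  * (ndd2 g1 g2 (2 * p) + 1) + ndd2 g1 g2 (2 * p).-1
            /\ ndd1 g1 g2 (2 * p).+1
              = (sigma g1 g2 (2 * p) %/ sigma g1 g2 (2 * p).+1)
                  * ndd1 g1 g2 (2 * p) + ndd1 g1 g2 (2 * p).-1) /\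
         (forall p, 1 <= p -> (2 * p).+2 <= K ->
            ndd2 g1 g2 (2 * p).+2
              = (sigma g1 g2 (2 * p).+1 %/ sigma g1 g2 (2 * p).+2)
                  * ndd2 g1 g2 (2 * p).+1 + ndd2 g1 g2 (2 * p)
            /\ ndd1 g1 g2 (2 * p).+2
              = (sigma g1 g2 (2 * p).+1 %/ sigma g1 g2 (2 * p).+2)
                  * (ndd1 g1 g2 (2 * p).+1 + 1) + ndd1 g1 g2 (2 * p))).
Proof.
move=> coprime_g g1_gt1 g1_lt_g2 sigmaK_gt1 sigmaSK.
have sigma_le1 : sigma g1 g2 K.+1 <= 1 by rewrite sigmaSK.
have sigma_gtK j : j <= K -> 1 < sigma g1 g2 j.
  by move=> le_jK; apply: (sigma_gt1 _ _ _ le_jK sigmaK_gt1).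
split=> [K0 | K_gt0]; first by subst K; split; [apply: ndd2_sigma_le1 | apply: ndd1_sigma_le1].
split; first exact: ndd2_sigma_le1.
split; first exact: ndd1_sigma_le1.
split; first by apply: ndd2_1 => //; apply: sigma_gtK.
split; first by apply: ndd1_1 => //; apply: sigma_gtK.
split; first by move=> K_gt1; split; [apply: ndd2_2 | apply: ndd1_2] => //; apply: sigma_gtK.
have odd2p p : odd (2 * p) = false by rewrite oddM.
split=> -[//|p] _; rewrite mulnS add2n => le_pK.
  have gt1 : 1 < sigma g1 g2 (2 * p).+3 by apply: sigma_gtK.
  by split; [rewrite [LHS]ndd2_rec | rewrite [LHS]ndd1_rec]; rewrite //= odd2p ?addn0.
have gt1 : 1 < sigma g1 g2 (2 * p).+4 by apply: sigma_gtK.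
by split; [rewrite [LHS]ndd2_rec | rewrite [LHS]ndd1_rec]; rewrite //= odd2p ?addn0.
Qed.
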